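(* Let $q\ge2$, $r\ge2$, $t,s\ge0$ be integers, let $M=\sum_{i=1}^{t}A_{t-i,s}(r-1)+\sum_{i=1}^{s}A_{t,s-i}(r-1)+1$, and let $\mathbf{y}_1,\dots,\mathbf{y}_M$ be distinct sequences and $\mathbf{x}\in J_r^*$ a sequence with $\mathbf{y}_i\in\mathcal{B}_{t,s}(\mathbf{x})$ for all $i\in[M]$. Write $\phi(\mathbf{y}_i)=\mathbf{v}_i=(v_{i,1},\dots,v_{i,r})$ and $\phi(\mathbf{x})=\mathbf{u}=(u_1,\dots,u_r)$. For $j\in[r]$ let $a_j=\min_{i\in[M]}v_{i,j}$, $b_j=\max_{i\in[M]}v_{i,j}$, and for each integer $k$ let $c_{j,k}$ be the number of indices $i\in[M]$ with $v_{i,j}=k$ (so $\sum_{k=a_j}^{b_j}c_{j,k}=M$). Then for every $j\in[r]$: (1) $b_j-t\le u_j\le a_j+s$; (2) for every integer $k$ with $a_j\le k<u_j$, $c_{j,k}\le A_{t,\,s-u_j+k}(r-1)$; (3) for every integer $k$ with $u_j<k\le b_j$, $c_{j,k}\le A_{t-k+u_j,\,s}(r-1)$.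
   Context: $\Sigma_q=\{0,\dots,q-1\}$. Every finite string $\mathbf{x}$ over $\Sigma_q$ is uniquely $c_1^{u_1}\cdots c_r^{u_r}$ with $c_i\ne c_{i+1}$, $u_i\ge1$; $r$ is its number of runs, $J_r^*$ the set of strings with exactly $r$ runs, and $\phi(\mathbf{x})=(u_1,\dots,u_r)\in\mathbb{Z}_+^r$ its run-length vector. The sticky-insdel ball $\mathcal{B}_{t,s}(\mathbf{x})$ (strings obtainable by at most $t$ sticky insertions, i.e. duplications of a symbol within its run, and at most $s$ sticky deletions, i.e. deletions of a symbol from a run of length $\ge2$) is the set of strings $c_1^{v_1}\cdots c_r^{v_r}$ with $(v_1,\dots,v_r)\in\mathbb{Z}_+^r$, $\sum_i\max\{0,u_i-v_i\}\le s$ and $\sum_i\max\{0,v_i-u_i\}\le t$. The numbers $A_{t,s}(r)$ (integers $t,s$, $r\ge1$): $A_{t,s}(r)=0$ if $t<0$ or $s<0$; $A_{t,s}(1)=t+s+1$ for $t,s\ge0$; for $r\ge2$, $t,s\ge0$: $A_{t,s}(r)=\sum_{i=1}^{t}A_{t-i,s}(r-1)+\sum_{i=1}^{s}A_{t,s-i}(r-1)+A_{t,s}(r-1)$. *)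

From mathcomp Require Import all_boot all_order all_algebra.
Set Implicit Arguments. Unset Strict Implicit. Unset Printing Implicit Defensive.
Import Order.TTheory GRing.Theory Num.Theory.

(* Run-length encoding: x = c_1^{u_1} ... c_r^{u_r}, c_i <> c_{i+1}, u_i >= 1 *)
Fixpoint rle (T : eqType) (x : seq T) : seq (T * nat) :=
  match x with
  | [::] => [::]
  | a :: x' =>
      match rle x' with
      | [::] => [:: (a, 1)]
      | (b, n) :: rest => if a == b then (b, n.+1) :: rest
                          else (a, 1) :: (b, n) :: rest
      end
  end.

Definition nruns (T : eqType) (x : seq T) : nat := size (rle x).
Definition run_syms (T : eqType) (x : seq T) : seq T := map fst (rle x).
Definition phi (T : eqType) (x : seq T) : seq nat := map snd (rle x).

Definition expand (T : Type) (c : seq T) (v : seq nat) : seq T :=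
  flatten [seq nseq p.2 p.1 | p <- zip c v].

(* sticky-insdel ball B_{t,s}(x); truncated subtraction m - n = max{0, m - n} *)
Definition in_ball (T : eqType) (t s : nat) (x y : seq T) : Prop :=
  exists v : seq nat,
    [/\ size v = nruns x, all (fun n => 0 < n) v,
        y = expand (run_syms x) v,
        (\sum_(i < size v) (nth 0 (phi x) i - nth 0 v i) <= s)%N &
        (\sum_(i < size v) (nth 0 v i - nth 0 (phi x) i) <= t)%N].

(* A_{t,s}(r) for t, s >= 0 (r >= 1); A_nat 0 is a junk value *)
Fixpoint A_nat (r t s : nat) : nat :=
  match r with
  | 0 => 0
  | r'.+1 =>
      match r' with
      | 0 => t + s + 1
      | _ => (\sum_(1 <= i < t.+1) A_nat r' (t - i) s
              + \sum_(1 <= i < s.+1) A_nat r' t (s - i)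
              + A_nat r' t s)%N
      end
  end.

Definition A (t s : int) (r : nat) : nat :=
  match t, s with
  | Posz tn, Posz sn => A_nat r tn sn
  | _, _ => 0
  end.

From mathcomp Require Import all_boot all_order all_algebra.
From mathcomp Require Import zify.
Import Order.TTheory GRing.Theory Num.Theory.

Set Implicit Arguments. Unset Strict Implicit. Unset Printing Implicit Defensive.

(* A string of the ball B_{t,s}(x) is determined by its run-length vector v,
   whose total excess over u = phi(x) is at most t and whose total deficit is
   at most s; comparing one coordinate gives (1).  The strings whose j-th run
   has length k < u_j have already spent u_j - k of the deficit budget on run j,
   so deleting coordinate j maps them injectively into the (r-1)-dimensional
   ball around u with budgets t and s - (u_j - k).  That ball has at most
   A_{t, s-u_j+k}(r-1) lattice points: split on whether its first coordinate is
   increased by i >= 1, decreased by i >= 1, or unchanged.  (3) is symmetric. *)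

Fixpoint excess (w u : seq nat) : nat :=
  match w, u with
  | a :: w', b :: u' => (a - b) + excess w' u'
  | _, _ => 0
  end.

Lemma excess_cat w1 w2 u1 u2 : size w1 = size u1 ->
  excess (w1 ++ w2) (u1 ++ u2) = excess w1 u1 + excess w2 u2.
Proof. by elim: w1 u1 => [|a w IH] [|b u] //= [/IH ->]; rewrite addnA. Qed.

Lemma excess_nth w u j : size w = size u -> nth 0 w j - nth 0 u j <= excess w u.
Proof.
elim: w u j => [|a w IH] [|b u] [|j] //= [hs]; first exact: leq_addr.
exact: leq_trans (IH _ _ hs) (leq_addl _ _).
Qed.

Lemma sum_nth_subn w u : size w = size u ->
  \sum_(i < size w) (nth 0 w i - nth 0 u i) = excess w u.
Proof.
elim: w u => [|a w IH] [|b u] //=; first by rewrite big_ord0.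
by move=> [hs]; rewrite big_ord_recl -IH.
Qed.

Definition rem_nth (j : nat) (w : seq nat) := take j w ++ drop j.+1 w.

Lemma size_rem_nth j w : j < size w -> size (rem_nth j w) = (size w).-1.
Proof. by move=> hj; rewrite size_cat size_take hj size_drop; lia. Qed.

Lemma excess_rem_nth j w u : j < size w -> size w = size u ->
  excess w u = excess (rem_nth j w) (rem_nth j u) + (nth 0 w j - nth 0 u j).
Proof.
move=> hjw hs; have hju : j < size u by rewrite -hs.
rewrite -{1}(cat_take_drop j w) -{1}(cat_take_drop j u).
rewrite (drop_nth 0 hjw) (drop_nth 0 hju) !excess_cat ?size_take ?hjw ?hju //=.
lia.
Qed.

Lemma rem_nth_inj j w1 w2 : j < size w1 -> j < size w2 ->
  rem_nth j w1 = rem_nth j w2 -> nth 0 w1 j = nth 0 w2 j -> w1 = w2.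
Proof.
move=> h1 h2 /eqP; rewrite eqseq_cat ?size_take ?h1 ?h2 // => /andP[/eqP e1 /eqP e2] e.
by rewrite -(cat_take_drop j w1) -(cat_take_drop j w2) (drop_nth 0 h1) (drop_nth 0 h2) e1 e2 e.
Qed.

(* Unlike A_nat, the recursion starts at dimension 0, with the single empty vector. *)
Fixpoint ball_bound (n t s : nat) : nat :=
  match n with
  | 0 => 1
  | n'.+1 => \sum_(1 <= i < t.+1) ball_bound n' (t - i) s
             + \sum_(1 <= i < s.+1) ball_bound n' t (s - i) + ball_bound n' t s
  end.

Lemma A_nat_ball_bound n t s : 0 < n -> A_nat n t s = ball_bound n t s.
Proof.
case: n => // n _; elim: n t s => [|n IH] t s.
  by rewrite /= !sum_nat_const_nat !muln1 !subn1.
rewrite [LHS]/=; congr (_ + _ + _); try apply: eq_bigr => i _; exact: IH.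
Qed.

(* May contain repetitions, since u0 - i is truncated. *)
Fixpoint ball_enum (u : seq nat) (t s : nat) : seq (seq nat) :=
  match u with
  | [::] => [:: [::]]
  | u0 :: u' =>
      flatten [seq map (cons (u0 + i)) (ball_enum u' (t - i) s) | i <- index_iota 1 t.+1]
      ++ flatten [seq map (cons (u0 - i)) (ball_enum u' t (s - i)) | i <- index_iota 1 s.+1]
      ++ map (cons u0) (ball_enum u' t s)
  end.

Lemma size_ball_enum u t s : size (ball_enum u t s) = ball_bound (size u) t s.
Proof.
elim: u t s => [|u0 u IH] t s //=.
rewrite !size_cat !size_flatten size_map IH addnA; congr (_ + _ + _);
  rewrite sumnE /shape -map_comp big_map; apply: eq_bigr => i _ /=;
  by rewrite size_map IH.
Qed.

Lemma mem_ball_enum u w t s : size w = size u ->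
  excess w u <= t -> excess u w <= s -> w \in ball_enum u t s.
Proof.
elim: u w t s => [|b u IH] [|a w] t s //= [hs] ht hs'.
rewrite !mem_cat; case: (ltngtP a b) => hab.
- apply/orP; right; apply/orP; left; apply/flatten_mapP; exists (b - a).
    by rewrite mem_index_iota; lia.
  by apply/mapP; exists w; [apply: IH => //; lia | congr cons; lia].
- apply/orP; left; apply/flatten_mapP; exists (a - b).
    by rewrite mem_index_iota; lia.
  by apply/mapP; exists w; [apply: IH => //; lia | congr cons; lia].
- apply/orP; right; apply/orP; right.
  by apply/mapP; exists w; [apply: IH => //; lia | rewrite hab].
Qed.

Lemma card_le_ball_bound (I : finType) (P : pred I) (g : I -> seq nat) u t s :
  {in P &, injective g} ->
  (forall i, P i -> [/\ size (g i) = size u, excess (g i) u <= t & excess u (g i) <= s]) ->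
  #|P| <= ball_bound (size u) t s.
Proof.
move=> ginj hg; rewrite -size_ball_enum cardE -(size_map g).
apply: uniq_leq_size.
  by rewrite map_inj_in_uniq ?enum_uniq // => i j; rewrite !mem_enum; apply: ginj.
move=> w /mapP[i]; rewrite mem_enum => Pi ->.
by case: (hg i Pi) => *; apply: mem_ball_enum.
Qed.

Lemma card_coord_fiber (I : finType) (g : I -> seq nat) u t s j k :
  j < size u -> injective g ->
  (forall i, [/\ size (g i) = size u, excess (g i) u <= t & excess u (g i) <= s]) ->
  #|[pred i | nth 0 (g i) j == k]|
    <= ball_bound (size u).-1 (t - (k - nth 0 u j)) (s - (nth 0 u j - k)).
Proof.
move=> hju ginj hg.
have hjg i : j < size (g i) by case: (hg i) => ->.
rewrite -(size_rem_nth hju).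
apply: (card_le_ball_bound (g := rem_nth j \o g)).
  move=> i1 i2; rewrite !inE => /eqP h1 /eqP h2 /= e.
  by apply/ginj/(rem_nth_inj (hjg i1) (hjg i2) e); rewrite h1 h2.
move=> i; rewrite inE => /eqP hk; case: (hg i) => hs ht hs'.
rewrite /= !size_rem_nth // hs; split => //.
- by move: ht; rewrite (excess_rem_nth (hjg i) hs) hk; lia.
- by move: hs'; rewrite (excess_rem_nth hju (esym hs)) hk; lia.
Qed.

Lemma sorted_run_syms (T : eqType) (x : seq T) :
  sorted (fun a b => a != b) (run_syms x).
Proof.
rewrite /run_syms; elim: x => [|a x IH] //=.
case: (rle x) IH => [|[b m] l] //= IH.
by case: ifP => /= [_|/negbT ->].
Qed.

Lemma rle_nseq_cat (T : eqType) (a : T) n z :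
  0 < n -> (forall b m l, rle z = (b, m) :: l -> a != b) ->
  rle (nseq n a ++ z) = (a, n) :: rle z.
Proof.
move=> + ha; elim: n => [|[|n] IH] // _.
  by rewrite /=; case E: (rle z) => [|[b m] l] //; rewrite ifN //; apply: ha E.
by rewrite -[nseq n.+2 a ++ z]/(a :: (nseq n.+1 a ++ z)) {1}/rle -/rle IH // eqxx.
Qed.

Lemma rle_expand (T : eqType) (c : seq T) v :
  sorted (fun a b => a != b) c -> all (fun n => 0 < n) v -> size c = size v ->
  rle (expand c v) = zip c v.
Proof.
rewrite /expand; elim: c v => [|a c IH] [|n v] //= hc /andP[hn hv] [hsz].
have hc' : sorted (fun a b => a != b) c by case: c hc {IH hsz} => //= b c /andP[].
rewrite rle_nseq_cat // IH //.
case: c v hc {IH hc' hsz hv} => [|b c] [|m v] //= /andP[hab _] b' m' l [<- _ _].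
exact: hab.
Qed.

Lemma size_phi (T : eqType) (x : seq T) : size (phi x) = nruns x.
Proof. exact: size_map. Qed.

Lemma in_ball_phi (T : eqType) t s (x z : seq T) : in_ball t s x z ->
  [/\ size (phi z) = size (phi x), z = expand (run_syms x) (phi z),
      excess (phi z) (phi x) <= t & excess (phi x) (phi z) <= s].
Proof.
case=> v [hsz hpos hz hs ht]; have hsort := sorted_run_syms x.
have szc : size (run_syms x) = size v by rewrite /run_syms size_map hsz.
have szx : size (phi x) = size v by rewrite size_phi hsz.
have -> : phi z = v by rewrite /phi hz rle_expand // -/(unzip2 _) unzip2_zip // szc.
by split; rewrite // -sum_nth_subn // szx.
Qed.

Section BallFamily.

Variables (T : eqType) (t s : nat) (x : seq T) (I : finType) (y : I -> seq T).
Hypotheses (y_inj : injective y) (y_ball : forall i, in_ball t s x (y i)).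

Lemma phi_ball_inj : injective (fun i => phi (y i)).
Proof.
move=> i1 i2 /= e; apply: y_inj.
by case: (in_ball_phi (y_ball i1)) (in_ball_phi (y_ball i2)) => _ -> _ _ [_ -> _ _]; rewrite e.
Qed.

Lemma nth_phi_ball_le j i : nth 0 (phi (y i)) j <= nth 0 (phi x) j + t.
Proof. by case: (in_ball_phi (y_ball i)) => hs _ ht _; have := excess_nth j hs; lia. Qed.

Lemma nth_phi_ball_ge j i : nth 0 (phi x) j <= nth 0 (phi (y i)) j + s.
Proof. by case: (in_ball_phi (y_ball i)) => hs _ _ hs'; have := excess_nth j (esym hs); lia. Qed.

Lemma card_run_length_fiber j k : j < nruns x ->
  let u := nth 0 (phi x) j in
  #|[pred i | nth 0 (phi (y i)) j == k]|
    <= ball_bound (nruns x).-1 (t - (k - u)) (s - (u - k)).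
Proof.
rewrite -size_phi => hj; apply: card_coord_fiber phi_ball_inj _ => // i.
by case: (in_ball_phi (y_ball i)).
Qed.

End BallFamily.

Theorem lemma3 (q r t s : nat) (hq : (2 <= q)%N) (hr : (2 <= r)%N)
  (y : 'I_((\sum_(1 <= i < t.+1) A (t - i)%:Z s r.-1
             + \sum_(1 <= i < s.+1) A t (s - i)%:Z r.-1)%N.+1) -> seq 'I_q)
  (x : seq 'I_q)
  (hy : injective y)
  (hx : nruns x = r)
  (hball : forall i, in_ball t s x (y i)) :
  forall j : nat, (j < r)%N ->
    let v := fun i => nth 0%N (phi (y i)) j in
    let u := nth 0%N (phi x) j in
    let a := \big[minn/v ord0]_i v i in
    let b := (\max_i v i)%N in
    let c := fun k : nat => #|[pred i | v i == k]| in
    [/\ ((b%:Z - t%:Z <= u%:Z)%R /\ (u%:Z <= a%:Z + s%:Z)%R),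
        (forall k : nat, (a <= k < u)%N ->
           (c k <= A t (s%:Z - u%:Z + k%:Z)%R r.-1)%N) &
        (forall k : nat, (u < k <= b)%N ->
           (c k <= A (t%:Z - k%:Z + u%:Z)%R s r.-1)%N)].
Proof.
move=> j hj v u a b c.
have v_le i : v i <= u + t by exact: nth_phi_ball_le hball j i.
have u_le i : u <= v i + s by exact: nth_phi_ball_ge hball j i.
have fiber k : c k <= A_nat r.-1 (t - (k - u)) (s - (u - k)).
  rewrite A_nat_ball_bound -?hx; last by lia.
  by apply: card_run_length_fiber hy hball _ _ _; rewrite hx.
have fiber_nonempty k : 0 < c k -> u <= k + s /\ k <= u + t.
  by case/card_gt0P => i; rewrite inE => /eqP <-.
split.
- have : b <= u + t by apply/bigmax_leqP => i _.
  have : u <= a + s by apply: (big_ind (fun m => u <= m + s)) => // m1 m2; rewrite /minn; case: ifP.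
  lia.
- move=> k /andP[_ hku]; case: (posnP (c k)) => [-> //|/fiber_nonempty [hk _]].
  have -> : (s%:Z - u%:Z + k%:Z)%R = Posz (s - (u - k)) by lia.
  by have := fiber k; rewrite (eqP (ltnW hku)) subn0.
- move=> k /andP[huk _]; case: (posnP (c k)) => [-> //|/fiber_nonempty [_ hk]].
  have -> : (t%:Z - k%:Z + u%:Z)%R = Posz (t - (k - u)) by lia.
  by have := fiber k; rewrite (eqP (ltnW huk)) subn0.
Qed.
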